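(* In the setting of the context, for $1\le i\le 2n$ let $A_1(i,c)$ be the area of the polygon with vertices $P_i,P_{i+1},\dots,P_{i+n}$ and let $L_V(i,c)=\sum_{j=i}^{i+n-1}\lambda_{j+\frac12}$ be the $V$-length of the polygonal arc $P_i,P_{i+1},\dots,P_{i+n}$. Then $A_1(i,c)-c\,L_V(i,c)$ is independent of $i$.
   Context: $[x,y]$ denotes the determinant of the matrix with columns $x,y\in\mathbb{R}^2$. Fix $n\ge2$; indices (integer and half-integer) are read modulo $2n$. $U$ is a convex $2n$-gon with distinct vertices $U_1,\dots,U_{2n}$ in counterclockwise order with $U_{i+n}=-U_i$, and $V_{i+\frac12}=(U_{i+1}-U_i)/[U_i,U_{i+1}]$. Let $c>0$ and let $P$ be a convex polygon with nonempty interior and vertex list $P_1,\dots,P_{2n}$ (listed counterclockwise, consecutive entries may coincide) with $P_{i+1}-P_i=\lambda_{i+\frac12}V_{i+\frac12}$, $\lambda_{i+\frac12}\ge0$, and $P_i-P_{i+n}=2cU_i$ for all $i$. *)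

From HB Require Import structures.
From mathcomp Require Import all_boot all_order all_algebra.
Set Implicit Arguments. Unset Strict Implicit. Unset Printing Implicit Defensive.
Import Order.TTheory GRing.Theory Num.Theory.
Local Open Scope ring_scope.

Section Defs.
Variable R : realFieldType.
Definition pt := (R * R)%type.

Definition det2 (x y : pt) : R := x.1 * y.2 - x.2 * y.1.

Definition padd (x y : pt) : pt := (x.1 + y.1, x.2 + y.2).
Definition psub (x y : pt) : pt := (x.1 - y.1, x.2 - y.2).
Definition popp (x : pt) : pt := (- x.1, - x.2).
Definition pscale (a : R) (x : pt) : pt := (a * x.1, a * x.2).

Definition shoelace (s : seq pt) : R :=
  \sum_(k < size s) det2 (nth (0, 0) s k) (nth (0, 0) s ((k + 1) %% size s)).
Definition poly_area (s : seq pt) : R := `| shoelace s | / 2.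

(* V_{i+1/2} = (U_{i+1} - U_i) / [U_i, U_{i+1}]  (stored at index i) *)
Definition Vdir (U : nat -> pt) (i : nat) : pt :=
  pscale (det2 (U i) (U i.+1))^-1 (psub (U i.+1) (U i)).

Definition A1 (n : nat) (P : nat -> pt) (i : nat) : R :=
  poly_area [seq P j | j <- iota i n.+1].

(* L_V(i, c) = sum_{j=i}^{i+n-1} lambda_{j+1/2} (lambda_{j+1/2} stored at index j) *)
Definition LV (n : nat) (lam : nat -> R) (i : nat) : R :=
  \sum_(i <= j < i + n) lam j.
End Defs.

From HB Require Import structures.
From mathcomp Require Import all_boot all_order all_algebra ring lra zify.
Import Order.TTheory GRing.Theory Num.Theory.
Local Open Scope ring_scope.

(* By convexity of P every arc polygon P_i .. P_{i+n} is positively oriented, so its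
   area is half its shoelace sum.  Advancing the arc by one vertex changes that sum
   by the signed area of the quadrilateral P_i P_{i+n} P_{i+n+1} P_{i+1}, whose
   sides P_i P_{i+n} and P_{i+1} P_{i+n+1} are 2c U_i and 2c U_{i+1}, and whose
   other two sides are lambda_{i+1/2} V and lambda_{i+n+1/2} (-V) by central
   symmetry.  Closing this trapezoid forces
   lambda_{i+1/2} + lambda_{i+n+1/2} = 2c [U_i, U_{i+1}], and then its area is
   c (lambda_{i+n+1/2} - lambda_{i+1/2}), exactly the change of c L_V. *)

Lemma modn_periodic {T : Type} {f : nat -> T} {m : nat} :
  (forall i, f (i + m)%N = f i) -> forall i, f (i %% m)%N = f i.
Proof.
move=> fper i; rewrite [in RHS](divn_eq i m).
by elim: (i %/ m)%N => [|q IHq]; rewrite ?mul0n ?add0n // mulSnr addnAC fper.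
Qed.

Section Plane.
Context {R : realFieldType}.
Implicit Types (x y z p u w : pt R) (P : nat -> pt R).

Definition edge_dir u w : pt R := pscale (det2 u w)^-1 (psub w u).

Lemma det2_popp u w : det2 (popp u) (popp w) = det2 u w.
Proof. by case: u w => [u1 u2] [w1 w2]; rewrite /det2 /popp /=; ring. Qed.

Lemma edge_dir_popp u w : edge_dir (popp u) (popp w) = popp (edge_dir u w).
Proof.
rewrite /edge_dir det2_popp; case: u w => [u1 u2] [w1 w2].
by rewrite /pscale /psub /popp /=; congr (_, _); ring.
Qed.

Lemma det2_edge_antipode u w : det2 (psub w u) (psub (popp u) u) = 2 * det2 u w.
Proof. by case: u w => [u1 u2] [w1 w2]; rewrite /det2 /psub /popp /=; ring. Qed.

Lemma det2_psub_rot x y p : det2 (psub x p) (psub y p) = det2 (psub y x) (psub p x).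
Proof. by case: x y p => [x1 x2] [y1 y2] [p1 p2]; rewrite /det2 /psub /=; ring. Qed.

Lemma shoelace_arc P i m :
  shoelace [seq P j | j <- iota i m.+1] =
  \sum_(k < m) det2 (P (i + k)%N) (P (i + k).+1) + det2 (P (i + m)%N) (P i).
Proof.
have nth_arc k : (k < m.+1)%N -> nth (0, 0) [seq P j | j <- iota i m.+1] k = P (i + k)%N.
  by move=> ltkm; rewrite (nth_map 0%N) ?size_iota // nth_iota.
rewrite /shoelace size_map size_iota big_ord_recr /= addn1 modnn !nth_arc // addn0.
congr (_ + _); apply: eq_bigr => k _; have ltkm := ltn_ord k.
by rewrite addn1 modn_small ?ltnS // !nth_arc ?addnS // ltnS ltnW.
Qed.

Lemma sum_det2_fan P i m p :
  \sum_(k < m) det2 (psub (P (i + k)%N) p) (psub (P (i + k).+1) p) =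
  \sum_(k < m) det2 (P (i + k)%N) (P (i + k).+1) + det2 p (P i) - det2 p (P (i + m)%N).
Proof.
elim: m => [|m IHm]; first by rewrite !big_ord0 addn0 add0r subrr.
by rewrite !big_ord_recr /= IHm addnS /det2 /psub /=; ring.
Qed.

Lemma shoelace_arc_ge0 P i m :
  (forall j k, 0 <= det2 (psub (P j.+1) (P j)) (psub (P k) (P j))) ->
  0 <= shoelace [seq P j | j <- iota i m.+1].
Proof.
move=> Pconvex; have fan := sum_det2_fan P i m (P i).
have -> : shoelace [seq P j | j <- iota i m.+1] =
          \sum_(k < m) det2 (psub (P (i + k)%N) (P i)) (psub (P (i + k).+1) (P i)).
  by rewrite shoelace_arc fan /det2; ring.
by apply: sumr_ge0 => k _; rewrite det2_psub_rot.
Qed.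

Lemma shoelace_arc_succ P i m :
  shoelace [seq P j | j <- iota i.+1 m.+1] - shoelace [seq P j | j <- iota i m.+1] =
  det2 (P (i + m)%N) (P (i + m).+1) + det2 (P (i + m).+1) (P i.+1)
  - det2 (P i) (P i.+1) - det2 (P (i + m)%N) (P i).
Proof.
pose F k := det2 (P k) (P k.+1).
have sum_front : \sum_(k < m.+1) F (i + k)%N = F i + \sum_(k < m) F (i.+1 + k)%N.
  by rewrite big_ord_recl addn0; congr (_ + _); apply: eq_bigr => k _; rewrite addSnnS.
have sum_back : \sum_(k < m.+1) F (i + k)%N = \sum_(k < m) F (i + k)%N + F (i + m)%N.
  exact: big_ord_recr.
have sum_shift : \sum_(k < m) F (i.+1 + k)%N = \sum_(k < m) F (i + k)%N + F (i + m)%N - F i.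
  by move: sum_front; rewrite sum_back; lra.
rewrite !shoelace_arc sum_shift addSn /F; ring.
Qed.

Lemma LV_succ n (lam : nat -> R) i : LV n lam i.+1 = LV n lam i + lam (i + n)%N - lam i.
Proof.
have sum_front : \sum_(i <= j < (i + n).+1) lam j = lam i + LV n lam i.+1.
  by rewrite /LV addSn big_ltn // ltnS leq_addr.
have sum_back : \sum_(i <= j < (i + n).+1) lam j = LV n lam i + lam (i + n)%N.
  by rewrite big_nat_recr // leq_addr.
by move: sum_front; rewrite sum_back; lra.
Qed.

Lemma symmetric_trapezoid_det2 {x y z p u w : pt R} {lam lam' c : R} :
  det2 u w != 0 ->
  psub y x = pscale lam (edge_dir u w) ->
  psub z p = pscale lam' (popp (edge_dir u w)) ->
  psub x p = pscale (2 * c) u -> psub y z = pscale (2 * c) w ->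
  det2 p z + det2 z y - det2 x y - det2 p x = 2 * c * (lam' - lam).
Proof.
case: x y z p u w => [x1 x2] [y1 y2] [z1 z2] [p1 p2] [u1 u2] [w1 w2].
rewrite /edge_dir /det2 /psub /pscale /popp /=.
set d := u1 * w2 - u2 * w1 => d_neq0 [ey1 ey2] [ez1 ez2] [ex1 ex2] [eyz1 eyz2].
have sum1 : (lam + lam') * (d^-1 * (w1 - u1)) = 2 * c * (w1 - u1) by lra.
have sum2 : (lam + lam') * (d^-1 * (w2 - u2)) = 2 * c * (w2 - u2) by lra.
have lam'E : lam' = 2 * c * d - lam.
  suff : (lam + lam') / d * d = 2 * c * d by rewrite divfK //; lra.
  transitivity (u1 * ((lam + lam') * (d^-1 * (w2 - u2)))
                - u2 * ((lam + lam') * (d^-1 * (w1 - u1)))); first by rewrite /d; ring.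
  by rewrite sum1 sum2 /d; ring.
have -> : y1 = x1 + lam * (d^-1 * (w1 - u1)) by lra.
have -> : y2 = x2 + lam * (d^-1 * (w2 - u2)) by lra.
have -> : z1 = x1 + lam * (d^-1 * (w1 - u1)) - 2 * c * w1 by lra.
have -> : z2 = x2 + lam * (d^-1 * (w2 - u2)) - 2 * c * w2 by lra.
have -> : p1 = x1 - 2 * c * u1 by lra.
have -> : p2 = x2 - 2 * c * u2 by lra.
by rewrite lam'E /d; field.
Qed.

Lemma det2_consecutive_gt0 {n : nat} {U : nat -> pt R} :
  (2 <= n)%N ->
  (forall i, U (i + 2 * n)%N = U i) ->
  (forall i k, (i < 2 * n)%N -> (k < 2 * n)%N -> k != i -> k != (i.+1 %% (2 * n))%N ->
     0 < det2 (psub (U i.+1) (U i)) (psub (U k) (U i))) ->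
  (forall i, U (i + n)%N = popp (U i)) ->
  forall i, 0 < det2 (U i) (U i.+1).
Proof.
move=> n_ge2 Uper Uconvex Usym i.
have n2_gt0 : (0 < 2 * n)%N by lia.
set r := (i %% (2 * n))%N; set a := ((r + n) %% (2 * n))%N.
have Ur : U r = U i := modn_periodic Uper i.
have Ur1 : U r.+1 = U i.+1.
  by rewrite -(modn_periodic Uper r.+1) -addn1 modnDml addn1 modn_periodic.
have Ua : U a = popp (U r) by rewrite modn_periodic // Usym.
have a_neq_r : a != r.
  have rE : r = ((r + 0) %% (2 * n))%N by rewrite addn0 modn_small ?ltn_pmod.
  by rewrite /a [X in _ != X]rE eqn_modDl mod0n modn_small; lia.
have a_neq_r1 : a != (r.+1 %% (2 * n))%N.
  by rewrite /a -[r.+1]addn1 eqn_modDl !modn_small; lia.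
(* U_{r+n} = -U_r lies strictly left of the edge U_r U_{r+1}: 2 [U_r, U_{r+1}] > 0 *)
have := Uconvex r a (ltn_pmod _ n2_gt0) (ltn_pmod _ n2_gt0) a_neq_r a_neq_r1.
by rewrite Ua Ur Ur1 det2_edge_antipode pmulr_rgt0.
Qed.

End Plane.

Theorem corollary3p5 (R : realFieldType) (n : nat) (U P : nat -> pt R)
    (lam : nat -> R) (c : R) :
  (2 <= n)%N ->
  (forall i, U (i + 2 * n)%N = U i) ->
  (forall i, P (i + 2 * n)%N = P i) ->
  (forall i, lam (i + 2 * n)%N = lam i) ->
  (forall i k, (i < 2 * n)%N -> (k < 2 * n)%N -> k != i -> k != (i.+1 %% (2 * n))%N ->
     0 < det2 (psub (U i.+1) (U i)) (psub (U k) (U i))) ->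
  (forall i, U (i + n)%N = popp (U i)) ->
  0 < c ->
  (forall i k, 0 <= det2 (psub (P i.+1) (P i)) (psub (P k) (P i))) ->
  (exists i j k, det2 (psub (P j) (P i)) (psub (P k) (P i)) != 0) ->
  (forall i, psub (P i.+1) (P i) = pscale (lam i) (Vdir U i)) ->
  (forall i, 0 <= lam i) ->
  (forall i, psub (P i) (P (i + n)%N) = pscale (2 * c) (U i)) ->
  forall i j, (i < 2 * n)%N -> (j < 2 * n)%N ->
    A1 n P i - c * LV n lam i = A1 n P j - c * LV n lam j.
Proof.
move=> n_ge2 Uper _ _ Uconvex Usym _ Pconvex _ Pedge _ Pdiag i j _ _.
suff step k : A1 n P k.+1 - c * LV n lam k.+1 = A1 n P k - c * LV n lam k.
  have const k : A1 n P k - c * LV n lam k = A1 n P 0 - c * LV n lam 0.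
    by elim: k => [|k IHk] //; rewrite step.
  by rewrite !const.
have det_neq0 : det2 (U k) (U k.+1) != 0.
  by rewrite gt_eqF ?(det2_consecutive_gt0 n_ge2 Uper Uconvex Usym).
have opp_edge : psub (P (k + n).+1) (P (k + n)%N) =
                pscale (lam (k + n)%N) (popp (edge_dir (U k) (U k.+1))).
  by rewrite Pedge -edge_dir_popp -!Usym addSn.
have next_diag : psub (P k.+1) (P (k + n).+1) = pscale (2 * c) (U k.+1).
  by rewrite -addSn Pdiag.
have := symmetric_trapezoid_det2 det_neq0 (Pedge k) opp_edge (Pdiag k) next_diag.
have := shoelace_arc_succ P k n.
rewrite /A1 /poly_area !ger0_norm ?shoelace_arc_ge0 // LV_succ; lra.
Qed.
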